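(* Let $k\ge2$ and let $z_{ij}\in\mathbb{C}$, $1\le i<j\le k$, satisfy $|z_{ij}|\le1$; set $z_{ji}=\overline{z_{ij}}$. Then the linear map $\Phi_{2k}^{(\mathbf z)}:M_{2k}(\mathbb{C})\to M_{2k}(\mathbb{C})$ defined below is positive.
   Context: Write $X\in M_{2k}(\mathbb{C})$ as a $k\times k$ block matrix $X=(X_{ij})_{i,j=1}^k$ with $X_{ij}\in M_2(\mathbb{C})$. Let $R_2:M_2(\mathbb{C})\to M_2(\mathbb{C})$, $R_2(Y)=\mathbb{I}_2\operatorname{Tr}Y-Y$. Define $\Phi_{2k}^{(\mathbf z)}(X)$ as the $k\times k$ block matrix with diagonal blocks $\frac{1}{2(k-1)}(\operatorname{Tr}X-\operatorname{Tr}X_{ii})\mathbb{I}_2$ and, for $i\ne j$, off-diagonal blocks $-\frac{z_{ij}}{2(k-1)}\big(X_{ij}-R_2(X_{ji})\big)$. (For all $z_{ij}=1$ this is the generalized Robertson map $\Phi_{2k}$.) A linear map is positive if it sends positive semidefinite matrices to positive semidefinite matrices. *)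

From HB Require Import structures.
From mathcomp Require Import all_boot all_order all_algebra.
Set Implicit Arguments. Unset Strict Implicit. Unset Printing Implicit Defensive.
Import Order.TTheory GRing.Theory Num.Theory.
Local Open Scope ring_scope.

(* Positive semidefinite matrix: v^* A v >= 0 for every column vector v
   (over a numClosedFieldType, 0 <= x forces x real). *)
Definition psdmx (C : numClosedFieldType) (n : nat) (A : 'M[C]_n) : Prop :=
  forall v : 'cV[C]_n, 0 <= ((map_mx Num.conj v)^T *m A *m v) 0 0.

Lemma bidx_proof (k : nat) (i : 'I_k) (p : 'I_2) : (2 * i + p < 2 * k)%N.
Proof.
apply: (@leq_trans (2 * i.+1)%N).
  by rewrite mulnS addnC ltn_add2r ltn_ord.
by rewrite leq_mul2l ltn_ord orbT.
Qed.
Definition bidx (k : nat) (i : 'I_k) (p : 'I_2) : 'I_(2 * k) :=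
  Ordinal (bidx_proof i p).

Lemma bblk_proof (k : nat) (a : 'I_(2 * k)) : (a %/ 2 < k)%N.
Proof. by rewrite ltn_divLR // [X in (_ < X)%N]mulnC ltn_ord. Qed.
Definition bblk (k : nat) (a : 'I_(2 * k)) : 'I_k := Ordinal (bblk_proof a).

Lemma bpos_proof (k : nat) (a : 'I_(2 * k)) : (a %% 2 < 2)%N.
Proof. by rewrite ltn_pmod. Qed.
Definition bpos (k : nat) (a : 'I_(2 * k)) : 'I_2 := Ordinal (bpos_proof a).

Definition blk (C : numClosedFieldType) (k : nat) (X : 'M[C]_(2 * k))
  (i j : 'I_k) : 'M[C]_2 := \matrix_(p, q) X (bidx i p) (bidx j q).

Definition R2 (C : numClosedFieldType) (Y : 'M[C]_2) : 'M[C]_2 := (\tr Y)%:M - Y.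

Definition zfull (C : numClosedFieldType) (k : nat) (z : 'I_k -> 'I_k -> C)
  (i j : 'I_k) : C := if (i < j)%N then z i j else Num.conj (z j i).

Definition Phiz (C : numClosedFieldType) (k : nat) (z : 'I_k -> 'I_k -> C)
  (X : 'M[C]_(2 * k)) : 'M[C]_(2 * k) :=
  \matrix_(a, b)
    let i := bblk a in let j := bblk b in
    let p := bpos a in let q := bpos b in
    if i == j then
      ((\tr X - \tr (blk X i i)) / (2 * (k - 1))%:R) * (p == q)%:R
    else
      - (zfull z i j / (2 * (k - 1))%:R) * (blk X i j - R2 (blk X j i)) p q.

From HB Require Import structures.
From mathcomp Require Import all_boot all_order all_algebra.
From mathcomp.algebra_tactics Require Import ring.
Import Order.TTheory GRing.Theory Num.Theory.
Set Implicit Arguments. Unset Strict Implicit. Unset Printing Implicit Defensive.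
Local Open Scope ring_scope.

(* Expanding v^* Phi(X) v block by block, the diagonal blocks contribute
   |v_i|^2 tr X_jj for every j <> i, so the form equals 1/(2(k-1)) times a sum
   over ordered pairs i <> j; pairing (i,j) with (j,i) reduces positivity to a
   statement about the 4x4 compression of X to the blocks i and j.  For vectors
   p, q of squared norms t, s, that pair term multiplied by t s is the sum of
   two values of the compressed quadratic form and of
   (1 - |z_ij|^2) t^2 s tr X_jj; the second value is taken at the spin flips
   u |-> (-conj u_1, conj u_0) of p and q, which is where R_2 comes from. *)

Lemma sum_offdiag_ge0 (R : numDomainType) (I : finType) (F : I -> I -> R) :
  (forall i j, i != j -> 0 <= F i j + F j i) ->
  0 <= \sum_i \sum_(j | j != i) F i j.
Proof.
move=> hF.
have swap : \sum_i \sum_(j | j != i) F i j = \sum_i \sum_(j | j != i) F j i.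
  rewrite (exchange_big_dep xpredT) //=.
  by apply: eq_bigr => i _; apply: eq_bigl => j; rewrite eq_sym.
rewrite -(pmulrn_lge0 _ (ltn0Sn 1)) mulr2n {2}swap -big_split /=.
apply: sumr_ge0 => i _; rewrite -big_split /=.
by apply: sumr_ge0 => j; rewrite eq_sym; exact: hF.
Qed.

Lemma big_ord2 (R : nmodType) (F : 'I_2 -> R) : \sum_r F r = F ord0 + F ord_max.
Proof. by rewrite big_ord_recl big_ord1; congr (_ + F _); apply: val_inj. Qed.

Lemma big_two (R : nmodType) (I : finType) (i j : I) (F : I -> R) :
  i != j -> (forall l, l != i -> l != j -> F l = 0) -> \sum_l F l = F i + F j.
Proof.
move=> hij F0; rewrite (bigD1 i) //= (bigD1 j) 1?eq_sym //=.
by rewrite big1 ?addr0 // => l /andP[li lj]; exact: F0.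
Qed.

Section BlockIndices.
Variable k : nat.

Lemma bblk_bidx (i : 'I_k) (p : 'I_2) : bblk (bidx i p) = i.
Proof. by apply: val_inj; rewrite /= mulnC divnMDl // divn_small ?addn0. Qed.

Lemma bpos_bidx (i : 'I_k) (p : 'I_2) : bpos (bidx i p) = p.
Proof. by apply: val_inj; rewrite /= mulnC modnMDl modn_small. Qed.

Lemma bidx_bblk (a : 'I_(2 * k)) : bidx (bblk a) (bpos a) = a.
Proof. by apply: val_inj; rewrite /= mulnC -divn_eq. Qed.

Lemma sum_bidx (R : nmodType) (F : 'I_(2 * k) -> R) :
  \sum_a F a = \sum_(i < k) \sum_(p < 2) F (bidx i p).
Proof.
rewrite pair_big /= (reindex (fun ip : 'I_k * 'I_2 => bidx ip.1 ip.2)) //=.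
apply: onW_bij; exists (fun a => (bblk a, bpos a)) => [[i p]|a].
  by rewrite /= bblk_bidx bpos_bidx.
by rewrite bidx_bblk.
Qed.

End BlockIndices.

Section Forms.
Variables (C : numClosedFieldType) (n : nat).

Definition form (u : 'I_n -> C) (M : 'M[C]_n) (w : 'I_n -> C) : C :=
  \sum_r \sum_s (u r)^* * M r s * w s.

Definition sqnorm (u : 'I_n -> C) : C := \sum_r (u r)^* * u r.

Lemma sqnorm_ge0 (u : 'I_n -> C) : 0 <= sqnorm u.
Proof. by apply: sumr_ge0 => r _; rewrite mulrC mul_conjC_ge0. Qed.

Lemma sqnorm_eq0 (u : 'I_n -> C) : sqnorm u = 0 -> forall r, u r = 0.
Proof.
move=> /eqP; rewrite psumr_eq0 => [/allP hu r|r _]; last first.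
  by rewrite mulrC mul_conjC_ge0.
by apply/eqP; rewrite -mul_conjC_eq0 mulrC; apply: hu; rewrite mem_index_enum.
Qed.

Lemma eq_form (u u' w w' : 'I_n -> C) (M : 'M[C]_n) :
  u =1 u' -> w =1 w' -> form u M w = form u' M w'.
Proof.
by move=> hu hw; apply: eq_bigr => r _; apply: eq_bigr => s _; rewrite hu hw.
Qed.

Lemma formZ (u w : 'I_n -> C) (a : C) (M : 'M[C]_n) :
  form u (a *: M) w = a * form u M w.
Proof.
rewrite /form mulr_sumr; apply: eq_bigr => r _; rewrite mulr_sumr.
by apply: eq_bigr => s _; rewrite mxE; ring.
Qed.

Lemma form_scalar (u : 'I_n -> C) (a : C) : form u a%:M u = a * sqnorm u.
Proof.
rewrite /form /sqnorm mulr_sumr; apply: eq_bigr => r _.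
rewrite (bigD1 r) //= big1 => [|s /negbTE hs]; last first.
  by rewrite mxE eq_sym hs mulr0n mulr0 mul0r.
by rewrite mxE eqxx mulr1n addr0; ring.
Qed.

Lemma form0l (M : 'M[C]_n) (w : 'I_n -> C) : form (fun=> 0) M w = 0.
Proof. by apply: big1 => r _; apply: big1 => s _; rewrite rmorph0 !mul0r. Qed.

Lemma form0r (u : 'I_n -> C) (M : 'M[C]_n) : form u M (fun=> 0) = 0.
Proof. by apply: big1 => r _; apply: big1 => s _; rewrite mulr0. Qed.

End Forms.

Definition form_block (C : numClosedFieldType) (n : nat) (A B D E : 'M[C]_n)
  (a b : 'I_n -> C) : C :=
  form a A a + form a B b + form b D a + form b E b.

Section TwoByTwo.
Variables (C : numClosedFieldType) (A B D E : 'M[C]_2).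
Hypothesis block_ge0 : forall a b : 'I_2 -> C, 0 <= form_block A B D E a b.

(* R2 Y is the adjugate of Y, so form (flip u) Y (flip w) = form w (R2 Y) u. *)
Definition flip (u : 'I_2 -> C) : 'I_2 -> C :=
  fun r => if r == ord0 then - (u ord_max)^* else (u ord0)^*.

Definition pair_term (p q : 'I_2 -> C) (zeta : C) : C :=
  sqnorm p * \tr E - zeta * form p (B - R2 D) q
  + (sqnorm q * \tr A - zeta^* * form q (D - R2 B) p).

Local Ltac expand2 :=
  rewrite /pair_term /form_block /form /sqnorm /flip /R2 /mxtrace !big_ord2
    ?mxE /= ?mulr1n ?mulr0n ?(rmorphM, rmorphD, rmorphN, rmorphB) /= ?conjCK.

Lemma pair_term_scaled (p q : 'I_2 -> C) (zeta : C) :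
  sqnorm p * sqnorm q * pair_term p q zeta =
    form_block A B D E (fun r => sqnorm q * p r)
      (fun r => - (zeta * sqnorm p) * q r)
  + form_block A B D E (fun r => sqnorm q * flip p r)
      (fun r => zeta^* * sqnorm p * flip q r)
  + (1 - zeta * zeta^*) * (sqnorm p ^+ 2 * sqnorm q) * \tr E.
Proof. by expand2; ring. Qed.

Lemma trace_ge0_of_block : 0 <= \tr A /\ 0 <= \tr E.
Proof.
pose e (s : 'I_2) : 'I_2 -> C := fun r => (r == s)%:R.
have -> : \tr A = form_block A B D E (e ord0) (fun=> 0)
                 + form_block A B D E (e ord_max) (fun=> 0).
  by rewrite /e; expand2; ring.
have -> : \tr E = form_block A B D E (fun=> 0) (e ord0)
                 + form_block A B D E (fun=> 0) (e ord_max).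
  by rewrite /e; expand2; ring.
by split; apply: addr_ge0.
Qed.

Lemma pair_term_ge0 (p q : 'I_2 -> C) (zeta : C) :
  `|zeta| <= 1 -> 0 <= pair_term p q zeta.
Proof.
move=> zeta_le1; have [trA_ge0 trE_ge0] := trace_ge0_of_block.
have [/sqnorm_eq0 p0|p_neq0] := eqVneq (sqnorm p) 0.
  have -> : pair_term p q zeta = sqnorm q * \tr A by expand2; rewrite !p0; ring.
  by rewrite mulr_ge0 ?sqnorm_ge0.
have [/sqnorm_eq0 q0|q_neq0] := eqVneq (sqnorm q) 0.
  have -> : pair_term p q zeta = sqnorm p * \tr E by expand2; rewrite !q0; ring.
  by rewrite mulr_ge0 ?sqnorm_ge0.
have pq_gt0 : 0 < sqnorm p * sqnorm q.
  by rewrite mulr_gt0 // lt_def ?p_neq0 ?q_neq0 sqnorm_ge0.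
have zeta_sq_le1 : 0 <= 1 - zeta * zeta^*.
  by rewrite -normCK subr_ge0 expr_le1.
rewrite -(pmulr_rge0 _ pq_gt0) pair_term_scaled.
apply: addr_ge0; first exact: addr_ge0 (block_ge0 _ _) (block_ge0 _ _).
by rewrite !mulr_ge0 ?exprn_ge0 ?sqnorm_ge0.
Qed.

End TwoByTwo.

Section Blocks.
Variables (C : numClosedFieldType) (k : nat).

Definition vblk (v : 'cV[C]_(2 * k)) (i : 'I_k) : 'I_2 -> C :=
  fun r => v (bidx i r) 0.

Lemma quad_blockE (M : 'M[C]_(2 * k)) (v : 'cV[C]_(2 * k)) :
  ((map_mx Num.conj v)^T *m M *m v) 0 0 =
  \sum_i \sum_j form (vblk v i) (blk M i j) (vblk v j).
Proof.
rewrite mxE; under eq_bigr => b _ do rewrite mxE mulr_suml.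
rewrite exchange_big /= sum_bidx; apply: eq_bigr => i _.
rewrite -exchange_big /= sum_bidx; apply: eq_bigr => j _.
rewrite exchange_big; apply: eq_bigr => p _; apply: eq_bigr => q _.
by rewrite !mxE.
Qed.

Lemma trace_blocks (M : 'M[C]_(2 * k)) : \tr M = \sum_i \tr (blk M i i).
Proof.
rewrite /mxtrace sum_bidx; apply: eq_bigr => i _.
by apply: eq_bigr => p _; rewrite mxE.
Qed.

Lemma psd_blocks (X : 'M[C]_(2 * k)) (V : 'I_k -> 'I_2 -> C) :
  psdmx X -> 0 <= \sum_i \sum_j form (V i) (blk X i j) (V j).
Proof.
move=> /(_ (\col_a V (bblk a) (bpos a))); rewrite quad_blockE.
suff vblkE i : vblk (\col_a V (bblk a) (bpos a)) i =1 V i.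
  under eq_bigr => i _ do under eq_bigr => j _ do
    rewrite (eq_form _ (vblkE i) (vblkE j)).
  by [].
by move=> r; rewrite /vblk mxE bblk_bidx bpos_bidx.
Qed.

Lemma psd_pair_blocks (X : 'M[C]_(2 * k)) (i j : 'I_k) (a b : 'I_2 -> C) :
  psdmx X -> i != j ->
  0 <= form_block (blk X i i) (blk X i j) (blk X j i) (blk X j j) a b.
Proof.
move=> hX hij; pose V l := if l == i then a else if l == j then b else fun=> 0.
have Vout l : l != i -> l != j -> V l = fun=> 0.
  by move=> /negbTE li /negbTE lj; rewrite /V li lj.
have := psd_blocks V hX.
rewrite (big_two hij) => [|l li lj]; last first.
  by apply: big1 => m _; rewrite (Vout l) // form0l.
rewrite !(big_two hij); last 2 first.
- by move=> l li lj; rewrite (Vout l) // form0r.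
- by move=> l li lj; rewrite (Vout l) // form0r.
by rewrite /V eqxx eq_sym (negbTE hij) eqxx /form_block !addrA.
Qed.

End Blocks.

Section Phiz.
Variables (C : numClosedFieldType) (k : nat) (z : 'I_k -> 'I_k -> C).
Variable X : 'M[C]_(2 * k).
Let c : C := (2 * (k - 1))%:R.

Lemma zfull_sym (i j : 'I_k) : i != j -> zfull z j i = (zfull z i j)^*.
Proof.
by rewrite /zfull; case: ltngtP => [|_|/val_inj->]; rewrite ?conjCK ?eqxx.
Qed.

Lemma zfull_le1 (i j : 'I_k) :
  (forall i j : 'I_k, (i < j)%N -> `|z i j| <= 1) -> i != j -> `|zfull z i j| <= 1.
Proof.
move=> hz ij; rewrite /zfull; case: ltnP => [|ji]; first exact: hz.
by rewrite norm_conjC hz // ltn_neqAle ji andbT eq_sym.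
Qed.

Lemma blk_Phiz (i j : 'I_k) :
  blk (Phiz z X) i j =
  if i == j then ((\tr X - \tr (blk X i i)) / c)%:M
  else - (zfull z i j / c) *: (blk X i j - R2 (blk X j i)).
Proof.
apply/matrixP => p q; rewrite !mxE !bblk_bidx !bpos_bidx /=.
by case: eqP => [->|_]; rewrite !mxE ?mulr_natr.
Qed.

Definition pair_half (V : 'I_k -> 'I_2 -> C) (i j : 'I_k) : C :=
  sqnorm (V i) * \tr (blk X j j)
  - zfull z i j * form (V i) (blk X i j - R2 (blk X j i)) (V j).

Lemma form_Phiz (V : 'I_k -> 'I_2 -> C) :
  \sum_i \sum_j form (V i) (blk (Phiz z X) i j) (V j) =
  c^-1 * \sum_i \sum_(j | j != i) pair_half V i j.
Proof.
rewrite mulr_sumr; apply: eq_bigr => i _.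
have offdiag : \tr X - \tr (blk X i i) = \sum_(j | j != i) \tr (blk X j j).
  by rewrite trace_blocks (bigD1 i) //= addrAC subrr add0r.
rewrite (bigD1 i) //= blk_Phiz eqxx form_scalar offdiag !mulr_suml -big_split /=.
rewrite mulr_sumr; apply: eq_bigr => j ji.
by rewrite blk_Phiz eq_sym (negbTE ji) formZ /pair_half; ring.
Qed.

Lemma pair_halfD (V : 'I_k -> 'I_2 -> C) (i j : 'I_k) : i != j ->
  pair_half V i j + pair_half V j i =
  pair_term (blk X i i) (blk X i j) (blk X j i) (blk X j j) (V i) (V j) (zfull z i j).
Proof. by move=> ij; rewrite /pair_half /pair_term (zfull_sym ij). Qed.

End Phiz.

Theorem mainTheorem7 (C : numClosedFieldType) (k : nat) (hk : (2 <= k)%N)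
  (z : 'I_k -> 'I_k -> C)
  (hz : forall i j : 'I_k, (i < j)%N -> `|z i j| <= 1) :
  forall X : 'M[C]_(2 * k), psdmx X -> psdmx (Phiz z X).
Proof.
move=> X hX v; rewrite quad_blockE form_Phiz.
apply: mulr_ge0; first by rewrite invr_ge0 ler0n.
apply: sum_offdiag_ge0 => i j ij; rewrite pair_halfD //.
by apply: pair_term_ge0; [move=> a b; exact: psd_pair_blocks | exact: zfull_le1].
Qed.
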